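(* Let $p$ be an odd prime, $G$ a finite non-abelian $p$-group, and $N$ a normal subgroup of $G$ with $C_G(N)\leq N$. Let $m$ be a positive integer with $d(Z(G))<m$. If $\mathrm{H}^1(G/N,\Omega_1(Z(N)))\cong\mathrm{F}_p^m$, then $G$ has a non-inner automorphism of order $p$.
   Context: $d(X)$ is the minimal number of generators of a group $X$; $\Omega_1(X)=\langle x\in X: x^p=1\rangle$; $\mathrm{F}_p$ is the field with $p$ elements. $G/N$ acts on $Z(N)$ (and on $\Omega_1(Z(N))$) via conjugation by $G$, making $\Omega_1(Z(N))$ an $\mathrm{F}_p(G/N)$-module; $\mathrm{H}^1(G/N,M)=\mathrm{Der}(G/N,M)/\mathrm{Ider}(G/N,M)$, where a derivation satisfies $\delta(xy)=\delta(x)^y\delta(y)$ and inner derivations are $\delta_h(g)=(h^{-1})^gh$. *)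

From HB Require Import structures.
From mathcomp Require Import all_boot all_fingroup all_solvable.
Set Implicit Arguments. Unset Strict Implicit. Unset Printing Implicit Defensive.

Import GroupScope.
Local Open Scope group_scope.

Definition dgen (gT : finGroupType) (X : {set gT}) : nat :=
  \big[minn/#|X|]_(S : {set gT} | <<S>> == X) #|S|.

Section Cohomology.
Variables (gT : finGroupType) (G N : {set gT}) (M : {set gT}).

(* Action of a coset xb \in G/N on M: conjugation by a representative.
   (Well defined when N centralizes M, e.g. M = Omega_1(Z(N)).) *)
Definition cact (m : gT) (xb : coset_of N) : gT := m ^ repr xb.

(* Derivations G/N -> M: delta(xy) = delta(x)^y delta(y); normalized to be
   1 outside G/N. *)
Definition is_der (d : {ffun coset_of N -> gT}) : bool :=
  [forall x, (x \in G / N) ==> (d x \in M)] &&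
  [forall x, (x \notin G / N) ==> (d x == 1)] &&
  [forall x in G / N, forall y in G / N, d (x * y) == cact (d x) y * d y].

Definition Der : {set {ffun coset_of N -> gT}} := [set d | is_der d].

Definition inner_der (h : gT) : {ffun coset_of N -> gT} :=
  [ffun xb => if xb \in G / N then cact h^-1 xb * h else 1].

Definition Ider : {set {ffun coset_of N -> gT}} := [set inner_der h | h in M].

Definition fmul (d e : {ffun coset_of N -> gT}) : {ffun coset_of N -> gT} :=
  [ffun xb => d xb * e xb].

Definition der_class (d : {ffun coset_of N -> gT}) :=
  [set fmul d i | i in Ider].

(* H^1(G/N, M) = Der / Ider, as the set of cosets. *)
Definition H1 : {set {set {ffun coset_of N -> gT}}} := [set der_class d | d in Der].

End Cohomology.

Definition inner_aut (gT : finGroupType) (G : {set gT}) (a : {perm gT}) : Prop :=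
  exists2 x, x \in G & {in G, forall y, a y = y ^ x}.

(* A derivation d : G/N -> Omega_1(Z(N)) twists G into the automorphism
   y |-> y d(yN), whose p-th power is trivial.  If every automorphism of order p
   were inner, each twist would be conjugation by some x in Z(N), so that
   d(yN) = [y, x] for all y in G and x^p lies in Z(G); the class of d in H^1 is
   then determined by the coset of x^p modulo Mho^1(Z(G)).  Hence
   |H^1| <= |Z(G) : Mho^1(Z(G))| = p^rank(Z(G)) <= p^d(Z(G)) < p^m. *)

From mathcomp Require Import all_boot all_fingroup all_solvable.
From Stdlib Require Import Classical.
Set Implicit Arguments. Unset Strict Implicit. Unset Printing Implicit Defensive.
Import GroupScope.

Lemma leq_card_imset_factor (T U V : finType) (A : {set T}) (f : T -> U) (g : T -> V) :
  {in A &, forall x y, f x = f y -> g x = g y} -> #|g @: A| <= #|f @: A|.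
Proof.
move=> fg; case: (set_0Vmem A) => [-> | [x0 Ax0]]; first by rewrite !imset0 cards0.
pose h u := g (odflt x0 [pick x in A | f x == u]).
apply: leq_trans (leq_imset_card h _); apply/subset_leq_card/subsetP.
move=> _ /imsetP[x Ax ->]; apply/imsetP; exists (f x); first exact: imset_f.
rewrite /h; case: pickP => [x' /andP[Ax' /eqP fx'x] | /(_ x)] /=.
  by rewrite (fg _ _ Ax' Ax fx'x).
by rewrite Ax eqxx.
Qed.

Lemma grank_le_dgen (gT : finGroupType) (X : {group gT}) : 'm(X) <= dgen X.
Proof.
rewrite /dgen; apply: (big_ind (fun n => 'm(X) <= n)) => [| n1 n2 | S /eqP <-].
- by have := grank_min X; rewrite genGid.
- by rewrite leq_min => -> ->.
- exact: grank_min.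
Qed.

Lemma index_Mho1_abelian (gT : finGroupType) (p : nat) (A : {group gT}) :
  p.-group A -> abelian A -> #|A : 'Mho^1(A)| = (p ^ 'r(A))%N.
Proof.
move=> pA cAA; rewrite (rank_abelian_pgroup pA cAA).
rewrite -card_pgroup ?(pgroupS (Ohm_sub 1 A)) // -divgS ?Mho_sub //.
by rewrite -(mul_card_Ohm_Mho_abelian 1 cAA) mulnK.
Qed.

Lemma mem_Ohm1_abelian (gT : finGroupType) (p : nat) (A : {group gT}) :
  prime p -> p.-group A -> abelian A ->
  forall x, (x \in 'Ohm_1(A)) = (x \in A) && (x ^+ p == 1).
Proof.
move=> p_pr pA cAA x; have := Ohm1_abelem pA cAA.
by rewrite abelemE // => /andP[_ /(Ohm1Eexponent p_pr)->]; rewrite !inE.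
Qed.

Section CommgAbelianNormal.
Variables (gT : finGroupType) (A : {group gT}) (y : gT).
Hypotheses (cAA : abelian A) (nAy : y \in 'N(A)).

Lemma mem_commg_norm a : a \in A -> [~ y, a] \in A.
Proof. by move=> Aa; rewrite commgEr groupM // memJ_norm ?groupV. Qed.

Lemma commgM_abelian a b : a \in A -> b \in A -> [~ y, a * b] = [~ y, a] * [~ y, b].
Proof.
move=> Aa Ab; have cA u v : u \in A -> v \in A -> commute u v.
  by move=> Au Av; apply: (centsP cAA).
rewrite commgMJ conjgE (cA _ _ (mem_commg_norm Aa) Ab) mulKg.
exact: cA (mem_commg_norm Ab) (mem_commg_norm Aa).
Qed.

Lemma commgX_abelian a k : a \in A -> [~ y, a ^+ k] = [~ y, a] ^+ k.
Proof. by move=> Aa; rewrite commgX //; apply: (centsP cAA) (mem_commg_norm Aa). Qed.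

End CommgAbelianNormal.

Section DerivationAutomorphism.
Variables (gT : finGroupType) (p : nat) (G N : {group gT}).
Hypotheses (p_pr : prime p) (pG : p.-group G) (nsNG : N <| G) (sCN : 'C_G(N) \subset N).

Local Notation M := 'Ohm_1('Z(N)).

Let sNG : N \subset G := normal_sub nsNG.
Let nNG : G \subset 'N(N) := normal_norm nsNG.
Let nZG : G \subset 'N('Z(N)).
Proof. exact: normal_norm (char_normal_trans (center_char N) nsNG). Qed.
Let cZZ : abelian 'Z(N) := center_abelian N.
Let sMZ : M \subset 'Z(N) := Ohm_sub 1 _.
Let sZN : 'Z(N) \subset N := center_sub N.
Let pZ : p.-group 'Z(N) := pgroupS (subset_trans sZN sNG) pG.
Let memM x : (x \in M) = (x \in 'Z(N)) && (x ^+ p == 1) :=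
  mem_Ohm1_abelian p_pr pZ cZZ x.


Lemma center_sub_centerN : 'Z(G) \subset 'Z(N).
Proof.
apply/subsetP => z /centerP[Gz cGz].
have cNz : z \in 'C(N) by apply/centP => y /(subsetP sNG)/cGz.
apply/centerP; split; last exact/centP.
by apply: (subsetP sCN); rewrite inE Gz.
Qed.

Lemma conjg_repr_coset a y : a \in 'Z(N) -> y \in 'N(N) -> a ^ repr (coset N y) = a ^ y.
Proof.
move=> Za nNy; have := mem_repr_coset (coset N y); rewrite val_coset //.
case/rcosetP => n Nn ->; rewrite conjgM.
have /centerP[_ cNa] := Za; congr (_ ^ y).
by apply/conjg_fixP/commgP; rewrite /commute (cNa n Nn).
Qed.

Lemma repr_quotient_mem xb : xb \in G / N -> repr xb \in G.
Proof.
by move=> Gxb; rewrite -(quotientGK nsNG) inE repr_coset_norm /= inE coset_reprK.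
Qed.

Section Derivation.
Variable d : {ffun coset_of N -> gT}.
Hypothesis Dd : d \in Der G N M.

Lemma der_coset_mem y : y \in G -> d (coset N y) \in M.
Proof.
move: Dd; rewrite inE => /andP[/andP[/forall_inP Dd_in _] _] Gy.
exact: Dd_in (mem_quotient N Gy).
Qed.

Lemma der_out xb : xb \notin G / N -> d xb = 1.
Proof. by move: Dd; rewrite inE => /andP[/andP[_ /forallP Dd_out] _] /(implyP (Dd_out xb))/eqP. Qed.

Lemma der_cosetM x y :
  x \in G -> y \in G -> d (coset N (x * y)) = d (coset N x) ^ y * d (coset N y).
Proof.
move: Dd; rewrite inE => /andP[_ /forall_inP DdM] Gx Gy.
have Zdx : d (coset N x) \in 'Z(N) by rewrite (subsetP sMZ) ?der_coset_mem.
rewrite morphM ?(subsetP nNG) // -(conjg_repr_coset Zdx) ?(subsetP nNG) //.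
by apply/eqP; move/forall_inP: (DdM _ (mem_quotient N Gx)); apply; apply: mem_quotient.
Qed.

Lemma der1 : d 1 = 1.
Proof.
have := der_cosetM (group1 G) (group1 G); rewrite mulg1 conjg1 morph1 => dd1.
by apply: (mulIg (d 1)); rewrite mul1g -dd1.
Qed.

Definition der_map y := y * d (coset N y).

Lemma der_map_morphic : morphic G der_map.
Proof.
apply/morphicP => x y Gx Gy; rewrite /der_map der_cosetM //.
by rewrite conjgE !mulgA mulgK.
Qed.

Let der_coset_memN y : y \in G -> d (coset N y) \in N.
Proof. by move=> Gy; rewrite (subsetP sZN) ?(subsetP sMZ) ?der_coset_mem. Qed.

Let der_map_mem y : y \in G -> der_map y \in G.
Proof. by move=> Gy; rewrite /der_map groupM // (subsetP sNG) ?der_coset_memN. Qed.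

Lemma der_map_injm : 'injm (morphm der_map_morphic).
Proof.
apply/injmP => x y Gx Gy; rewrite /= !morphmE /der_map => dxy.
have: coset N (x * d (coset N x)) = coset N (y * d (coset N y)) by rewrite dxy.
by rewrite !coset_kerr ?der_coset_memN // => eq_xy; move: dxy; rewrite eq_xy => /mulIg.
Qed.

Lemma der_map_im : morphm der_map_morphic @* G = G.
Proof.
apply/eqP; rewrite eqEcard (card_injm der_map_injm) // leqnn andbT.
by apply/subsetP => _ /morphimP[y _ Gy ->]; rewrite /= morphmE der_map_mem.
Qed.

Definition der_aut := aut der_map_injm der_map_im.

Lemma der_autE y : y \in G -> der_aut y = y * d (coset N y).
Proof. by move=> Gy; rewrite autE //= morphmE. Qed.

Lemma der_autX k y : y \in G -> (der_aut ^+ k) y = y * d (coset N y) ^+ k.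
Proof.
move=> Gy; rewrite permX; elim: k => [|k IHk] /=; first by rewrite mulg1.
rewrite IHk der_autE; last by rewrite groupM ?groupX // (subsetP sNG) ?der_coset_memN.
by rewrite coset_kerr ?groupX ?der_coset_memN // expgSr mulgA.
Qed.

Lemma der_autXp : der_aut ^+ p = 1.
Proof.
apply: (eq_Aut (groupX _ (Aut_aut _ _)) (group1 _)) => y Gy.
rewrite der_autX // perm1; have := der_coset_mem Gy.
by rewrite memM => /andP[_ /eqP ->]; rewrite mulg1.
Qed.

Lemma der_aut_inner :
  (forall a, a \in Aut G -> #[a] = p -> inner_aut G a) -> inner_aut G der_aut.
Proof.
move=> innerAut; have [der_aut1 | ntder_aut] := eqVneq der_aut 1.
  by exists 1 => // y Gy; rewrite der_aut1 perm1 conjg1.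
apply: innerAut; first exact: Aut_aut.
apply/prime_nt_dvdP; rewrite ?order_eq1 //.
by rewrite order_dvdn der_autXp.
Qed.

(* Unlike [d = inner_der G N x], which only involves the representatives
   [repr xb], this asks d(yN) = [y, x] for every y in G; taking y in N then
   shows that x centralizes N. *)
Definition commg_der x := [forall y in G, d (coset N y) == [~ y, x]].

Lemma commg_der_of_inner_aut :
  inner_aut G der_aut -> exists2 x, x \in G & commg_der x.
Proof.
case=> x Gx der_autJ; exists x => //; apply/forall_inP => y Gy.
by rewrite commgEl -der_autJ // der_autE // mulKg.
Qed.

Section CommgDerivation.
Variable x : gT.
Hypotheses (Gx : x \in G) (dx : commg_der x).

Let der_commg y : y \in G -> d (coset N y) = [~ y, x].
Proof. by move=> Gy; apply/eqP; move/forall_inP: dx; apply. Qed.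

Lemma commg_der_center : x \in 'Z(N).
Proof.
have cNx : x \in 'C(N).
  apply/centP => y Ny; apply/esym/commgP.
  by rewrite -der_commg ?(subsetP sNG) // coset_id // der1.
by apply/centerP; split; [apply: (subsetP sCN); rewrite inE Gx | apply/centP].
Qed.

Lemma commg_der_expp : x ^+ p \in 'Z(G).
Proof.
apply/centerP; split=> [|y Gy]; first exact: groupX.
apply/esym/commgP; rewrite (commgX_abelian cZZ) ?(subsetP nZG) ?commg_der_center //.
by rewrite -der_commg //; have := der_coset_mem Gy; rewrite memM => /andP[].
Qed.

Lemma commg_der_inner : d = inner_der G N x.
Proof.
apply/ffunP => xb; rewrite ffunE /cact; case: ifP => [Gxb | /negbT/der_out //].
by rewrite -{1}(coset_reprK xb) der_commg ?repr_quotient_mem // commgEr.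
Qed.

End CommgDerivation.
End Derivation.

Lemma inner_derM a b : a \in 'Z(N) -> b \in 'Z(N) ->
  inner_der G N (a * b) = fmul (inner_der G N a) (inner_der G N b).
Proof.
move=> Za Zb; apply/ffunP => xb; rewrite !ffunE; case: ifP => [Gxb | _]; last by rewrite mulg1.
have nZy := subsetP nZG _ (repr_quotient_mem Gxb).
by rewrite /cact -!commgEr (commgM_abelian cZZ).
Qed.

Lemma inner_der_mul_center u a : u \in 'Z(G) ->
  inner_der G N (u * a) = inner_der G N a.
Proof.
move=> /centerP[_ cGu]; apply/ffunP => xb; rewrite !ffunE; case: ifP => // Gxb.
have /esym/commgP/eqP cyu := cGu _ (repr_quotient_mem Gxb).
by rewrite /cact -!commgEr commgMJ cyu conj1g mulg1.
Qed.

Lemma der_class_fmul_inner d w : w \in M ->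
  der_class G M (fmul d (inner_der G N w)) = der_class G M d.
Proof.
have fmulA (e1 e2 e3 : {ffun coset_of N -> gT}) :
    fmul (fmul e1 e2) e3 = fmul e1 (fmul e2 e3).
  by apply/ffunP => xb; rewrite !ffunE mulgA.
move=> Mw.
apply/setP => e; apply/imsetP/imsetP => -[_ /imsetP[h Mh ->] ->{e}].
  exists (inner_der G N (w * h)); first by rewrite imset_f ?groupM.
  by rewrite fmulA inner_derM ?(subsetP sMZ).
exists (inner_der G N (w^-1 * h)); first by rewrite imset_f ?groupM ?groupV.
by rewrite fmulA -inner_derM ?groupM ?groupV ?(subsetP sMZ) ?mulKVg.
Qed.

Lemma der_class_eq d1 d2 x1 x2 u :
  d1 \in Der G N M -> d2 \in Der G N M ->
  x1 \in G -> commg_der d1 x1 -> x2 \in G -> commg_der d2 x2 ->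
  u \in 'Z(G) -> x1 ^+ p = u ^+ p * x2 ^+ p ->
  der_class G M d1 = der_class G M d2.
Proof.
move=> Dd1 Dd2 Gx1 dx1 Gx2 dx2 ZGu x1p.
have Zx1 := commg_der_center Dd1 Gx1 dx1; have Zx2 := commg_der_center Dd2 Gx2 dx2.
have Zu := subsetP center_sub_centerN u ZGu.
have cZ a b : a \in 'Z(N) -> b \in 'Z(N) -> commute a b.
  by move=> Za Zb; apply: (centsP cZZ).
have Zux2 : u * x2 \in 'Z(N) by rewrite groupM.
(* x1 = u x2 w with w := (u x2)^-1 x1 in M and u central in G, so d1 is d2
   times the inner derivation of w. *)
have Mw : (u * x2)^-1 * x1 \in M.
  have cx1 : commute (u * x2)^-1 x1 by apply: cZ; rewrite ?groupV.
  rewrite memM groupM ?groupV //= expgMn // expgVn (expgMn _ (cZ _ _ Zu Zx2)).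
  by rewrite -x1p mulVg.
rewrite (commg_der_inner Dd1 dx1) (commg_der_inner Dd2 dx2).
rewrite -(der_class_fmul_inner (inner_der G N x2) Mw).
rewrite -inner_derM ?(subsetP sMZ _ Mw) // -[in RHS](inner_der_mul_center _ ZGu).
by rewrite mulgA mulKVg.
Qed.

Lemma card_H1_le_index_Mho :
  (forall a, a \in Aut G -> #[a] = p -> inner_aut G a) ->
  #|H1 G N M| <= #|'Z(G) : 'Mho^1('Z(G))|.
Proof.
move=> innerAut.
pose x_ d := odflt 1 [pick x in G | commg_der d x].
have x_P d : d \in Der G N M -> x_ d \in G /\ commg_der d (x_ d).
  move=> Dd; rewrite /x_; case: pickP => [x /andP[Gx dx] // | no_x].
  have [x Gx dx] := commg_der_of_inner_aut (der_aut_inner Dd innerAut).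
  by have := no_x x; rewrite Gx dx.
pose Mho_coset d := 'Mho^1('Z(G)) :* x_ d ^+ p.
apply: (@leq_trans #|Mho_coset @: Der G N M|).
  have MhoE : ('Mho^1('Z(G))%G : {set gT}) = [set u ^+ (p ^ 1) | u in 'Z(G)].
    exact: MhoEabelian (pgroupS (center_sub G) pG) (center_abelian G).
  apply: leq_card_imset_factor => d1 d2 Dd1 Dd2 /rcoset_eqP.
  rewrite mem_rcoset MhoE => /imsetP[u ZGu]; rewrite expn1 => xp_u.
  have [[Gx1 dx1] [Gx2 dx2]] := (x_P _ Dd1, x_P _ Dd2).
  by apply: (der_class_eq Dd1 Dd2 Gx1 dx1 Gx2 dx2 ZGu); rewrite -xp_u mulgKV.
apply/subset_leq_card/subsetP => _ /imsetP[d Dd ->].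
have [Gx dx] := x_P _ Dd; apply/rcosetsP; exists (x_ d ^+ p) => //.
by have := commg_der_expp Dd Gx dx.
Qed.

End DerivationAutomorphism.

Theorem lemma2p5 (gT : finGroupType) (p : nat) (G N : {group gT}) (m : nat) :
  prime p -> odd p ->
  p.-group G -> ~~ abelian G ->
  N <| G -> 'C_G(N) \subset N ->
  0 < m -> dgen 'Z(G) < m ->
  #|H1 G N 'Ohm_1('Z(N))| = (p ^ m)%N ->
  exists2 a : {perm gT}, a \in Aut G & (#[a]%g = p /\ ~ inner_aut G a).
Proof.
move=> p_pr _ pG _ nsNG sCN _ dZG_lt_m cardH1; apply: NNPP => no_outer.
have innerAut a : a \in Aut G -> #[a] = p -> inner_aut G a.
  by move=> AutGa oa; apply: NNPP => not_inner; apply: no_outer; exists a.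
have := card_H1_le_index_Mho p_pr pG nsNG sCN innerAut.
have [pZ cZZ] := (pgroupS (center_sub G) pG, center_abelian G).
rewrite cardH1 (index_Mho1_abelian pZ cZZ) -grank_abelian // leq_exp2l ?prime_gt1 //.
by rewrite leqNgt (leq_ltn_trans (grank_le_dgen _) dZG_lt_m).
Qed.
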